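(* Let $f,g:X\to Y$ be continuous maps, where $Y$ is endowed with a metric $d$. If $f$ and $g$ are equal at infinity, then $L(f)=L(g)$.
   Context: All topological spaces are Hausdorff, second countable and locally compact. $f$ and $g$ are equal at infinity if for every sequence $(x_n)$ in $X$ without limit points, $\lim_n d(f(x_n),g(x_n))=0$. The limit set $L(f)$ is the set of all $y\in Y$ for which there is a sequence $(x_n)$ in $X$ with no limit points in $X$ such that $f(x_n)\to y$. *)

From HB Require Import structures.
From mathcomp Require Import all_boot all_order all_algebra.
From mathcomp Require Import all_classical all_reals all_analysis.
Set Implicit Arguments. Unset Strict Implicit. Unset Printing Implicit Defensive.
Import Order.TTheory GRing.Theory Num.Theory numFieldTopology.Exports.
Local Open Scope classical_set_scope.
Local Open Scope ring_scope.

Definition no_limit_points {X : topologicalType} (u : nat -> X) : Prop :=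
  cluster (u @ \oo) = set0.

Definition equal_at_infinity {R : realType} {X : topologicalType}
  {Y : metricType R} (f g : X -> Y) : Prop :=
  forall u : nat -> X, no_limit_points u ->
    (fun n => mdist (f (u n)) (g (u n))) @ \oo --> (0 : R).

Definition limit_set {X Y : topologicalType} (f : X -> Y) : set Y :=
  [set y | exists u : nat -> X, no_limit_points u /\ (f \o u) @ \oo --> y].

From HB Require Import structures.
From mathcomp Require Import all_boot all_order all_algebra.
From mathcomp Require Import all_classical all_reals all_analysis.
Import Order.TTheory GRing.Theory Num.Theory numFieldTopology.Exports.
Local Open Scope classical_set_scope.
Local Open Scope ring_scope.

(* Equality at infinity transports every sequence witnessing [y \in L(f)] to
   one witnessing [y \in L(g)]: the two image sequences are asymptotically at
   distance 0, so they have the same limit. *)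

Section LimitSet.
Context {R : realType} {Y : metricType R}.

Lemma cvg_mdist0 {T : Type} (F : set_system T) {FF : Filter F}
    (a b : T -> Y) (y : Y) :
  (fun t => mdist (a t) (b t)) @ F --> (0 : R) ->
  a @ F --> y -> b @ F --> y.
Proof.
move=> dab0 ay; apply/metricType_numDomainType.cvgrPdist_lt => e e0.
have e20 : 0 < e / 2 by rewrite divr_gt0.
have ya := metricType_numDomainType.cvgr_dist_lt ay e20.
have ab := pseudometric_normed_Zmodule.cvgr_dist_lt _ _ dab0 _ e20.
near=> t.
have yat : mdist y (a t) < e / 2 by near: t; exact: ya.
have abt : `|0 - mdist (a t) (b t)| < e / 2 by near: t; exact: ab.
rewrite sub0r normrN in abt.
rewrite (le_lt_trans (metric_triangle _ (a t) _)) // [e]splitr ltrD //.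
exact: le_lt_trans (ler_norm _) abt.
Unshelve. all: by end_near.
Qed.

Context {X : topologicalType}.

Lemma equal_at_infinity_sym {f g : X -> Y} :
  equal_at_infinity f g -> equal_at_infinity g f.
Proof.
move=> fg u nu; under eq_fun => n do rewrite metric_sym.
exact: fg.
Qed.

Lemma limit_set_sub {f g : X -> Y} :
  equal_at_infinity f g -> limit_set f `<=` limit_set g.
Proof.
move=> fg y [u [nu fuy]]; exists u; split => //.
exact: cvg_mdist0 (fg u nu) fuy.
Qed.

End LimitSet.

Theorem lemma2p1 (R : realType) (X : topologicalType) (Y : metricType R)
  (hX : hausdorff_space X) (scX : @second_countable X)
  (lcX : locally_compact [set: X])
  (hY : hausdorff_space Y) (scY : @second_countable Y)
  (lcY : locally_compact [set: Y])
  (f g : X -> Y) (cf : continuous f) (cg : continuous g) :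
  equal_at_infinity f g -> limit_set f = limit_set g.
Proof.
move=> fg; apply/seteqP; split; first exact: limit_set_sub fg.
exact: limit_set_sub (equal_at_infinity_sym fg).
Qed.
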